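(* The axiom $p\mathrel{\Box\!\!\!\rightarrow} p$ is $\kappa_\emptyset$-persistent: if a conditional Esakia space validates $p\mathrel{\Box\!\!\!\rightarrow} p$ then so does its empty fill-in.
   Context: A conditional Esakia space is an Esakia space $(X,\leq,\tau)$ with relations $\mathcal{R}=\{R_a\mid a\text{ a clopen upset}\}$ such that $\{x\mid R_a[x]\subseteq b\}$ is clopen for clopen upsets $a,b$, $(\leq\circ R_a\circ\leq)=R_a$, and each $R_a[x]$ is closed; validity uses clopen valuations. A conditional frame is $(X,\leq,\mathcal{R})$ with relations $R_a$ for every upset $a$ satisfying $(\leq\circ R_a)\subseteq(R_a\circ\leq)$; validity uses valuations into upsets, with $x\models\phi\mathrel{\Box\!\!\!\rightarrow}\psi$ iff every $R_{V(\phi)}$-successor of $x$ satisfies $\psi$. The empty fill-in $\kappa_\emptyset$ of a conditional Esakia space is the conditional frame $(X,\leq,\mathcal{R}')$ where $R'_a=R_a$ for clopen upsets $a$ and $R'_a=\emptyset$ for non-clopen upsets $a$. *)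

From HB Require Import structures.
From mathcomp Require Import all_boot all_order.
From mathcomp Require Import all_classical.
From mathcomp Require Import topology.

Set Implicit Arguments.
Unset Strict Implicit.
Unset Printing Implicit Defensive.

Local Open Scope classical_set_scope.

Section Defs.
Variable X : Type.

Definition upset (le : X -> X -> Prop) (A : set X) : Prop :=
  forall x y, le x y -> A x -> A y.

Definition downclosure (le : X -> X -> Prop) (A : set X) : set X :=
  [set x | exists2 y, A y & le x y].

Definition partial_order (le : X -> X -> Prop) : Prop :=
  (forall x, le x x) /\
  (forall x y, le x y -> le y x -> x = y) /\
  (forall x y z, le x y -> le y z -> le x z).

Definition img (R : X -> X -> Prop) (x : X) : set X := [set y | R x y].

End Defs.

Definition esakia_space (X : topologicalType) (le : X -> X -> Prop) : Prop :=
  partial_order le /\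
  compact [set: X] /\
  (* Priestley separation axiom *)
  (forall x y : X, ~ le x y ->
     exists U : set X, clopen U /\ upset le U /\ U x /\ ~ U y) /\
  (forall U : set X, clopen U -> clopen (downclosure le U)).

(* A family of relations indexed by subsets of X; only the values at the
   relevant subsets (clopen upsets, resp. upsets) matter. *)
Definition relfam (X : Type) := set X -> X -> X -> Prop.

Definition clopen_upset (X : topologicalType) (le : X -> X -> Prop)
  (a : set X) : Prop := clopen a /\ upset le a.

Definition conditional_esakia_space (X : topologicalType)
  (le : X -> X -> Prop) (R : relfam X) : Prop :=
  esakia_space le /\
  (forall a b : set X, clopen_upset le a -> clopen_upset le b ->
     clopen [set x | img (R a) x `<=` b]) /\
  (* (<= o R_a o <=) = R_a  (the inclusion R_a <= (<= o R_a o <=) is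
     automatic from reflexivity) *)
  (forall a : set X, clopen_upset le a ->
     forall x y z w, le x y -> R a y z -> le z w -> R a x w) /\
  (forall a : set X, clopen_upset le a -> forall x, closed (img (R a) x)).

Definition conditional_frame (X : Type) (le : X -> X -> Prop) (R : relfam X)
  : Prop :=
  partial_order le /\
  (forall a : set X, upset le a ->
     forall x y z, le x y -> R a y z -> exists2 w, R a x w & le w z).

Definition empty_fill_in (X : topologicalType) (le : X -> X -> Prop)
  (R : relfam X) : relfam X :=
  fun a x y => clopen_upset le a /\ R a x y.

Inductive form : Type :=
  | Var : nat -> form
  | Bot : form
  | Top : form
  | And : form -> form -> form
  | Or : form -> form -> form
  | Imp : form -> form -> form
  | Cond : form -> form -> form.

Notation "phi '[]->' psi" := (Cond phi psi) (at level 60, right associativity).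

Fixpoint sat (X : Type) (le : X -> X -> Prop) (R : relfam X)
  (V : nat -> set X) (x : X) (phi : form) {struct phi} : Prop :=
  match phi with
  | Var n => V n x
  | Bot => False
  | Top => True
  | And p q => sat le R V x p /\ sat le R V x q
  | Or p q => sat le R V x p \/ sat le R V x q
  | Imp p q => forall y, le x y -> sat le R V y p -> sat le R V y q
  | Cond p q => forall y, R [set z | sat le R V z p] x y -> sat le R V y q
  end.

Definition valid_esakia (X : topologicalType) (le : X -> X -> Prop)
  (R : relfam X) (phi : form) : Prop :=
  forall V : nat -> set X, (forall n, clopen_upset le (V n)) ->
    forall x, sat le R V x phi.

Definition valid_frame (X : Type) (le : X -> X -> Prop)
  (R : relfam X) (phi : form) : Prop :=
  forall V : nat -> set X, (forall n, upset le (V n)) ->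
    forall x, sat le R V x phi.

From mathcomp Require Import all_boot all_classical topology.

(* In the empty fill-in an [R']-successor for the upset [V n] exists only when
   [V n] is a clopen upset, and it is then an [R]-successor for the clopen-upset
   valuation that is constantly [V n]. Nothing about the topology or the order
   is used, which is why the theorem can ignore the Esakia-space hypothesis. *)
Lemma valid_frame_empty_fill_in_cond_refl (X : topologicalType)
    (le : X -> X -> Prop) (R : relfam X) (n : nat) :
  valid_esakia le R (Var n []-> Var n) ->
  valid_frame le (empty_fill_in le R) (Var n []-> Var n).
Proof.
move=> validR V _ x y /= [clopen_upset_Vn Rxy].
exact: (validR (fun=> V n) (fun=> clopen_upset_Vn) x y Rxy).
Qed.

Theorem lemma5p3 (X : topologicalType) (le : X -> X -> Prop) (R : relfam X) :
  conditional_esakia_space le R ->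
  valid_esakia le R (Var 0 []-> Var 0) ->
  valid_frame le (empty_fill_in le R) (Var 0 []-> Var 0).
Proof. by move=> _; exact: valid_frame_empty_fill_in_cond_refl. Qed.
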